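(* Let $p$ be a prime, $m\ge 1$ and $r$ integers with $r^p\equiv 1 \pmod m$, and let $G=\langle x, y\mid x^p=y^m=1,\ x^{-1}yx=y^r\rangle$ (so $G\cong C_p\ltimes C_m$, $|G|=pm$), where $p$ is the smallest prime divisor of $|G|$ and $\gcd(p(r-1), m)=1$. Let $N=\langle y\rangle$, let $M$ be any subgroup of $N$, let $u\in N$, and let $0\le s<s'\le p-1$ be integers. Then: (i) if $u^{r^s}\in M$, then $\{u, u^{r},\ldots, u^{r^{p-1}}\}\subseteq M$; (ii) if $u^{r^s}$ and $u^{r^{s'}}$ lie in the same coset of $M$, then $\{u, u^{r},\ldots, u^{r^{p-1}}\}\subseteq M$; (iii) if $u\neq 1$, then $u^{r^s}\neq u^{r^{s'}}$. *)

From mathcomp Require Import all_boot all_algebra all_fingroup.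
Set Implicit Arguments. Unset Strict Implicit. Unset Printing Implicit Defensive.
Import GRing.Theory Num.Theory.

Definition expgz (gT : finGroupType) (g : gT) (z : int) : gT :=
  match z with
  | Posz n => (g ^+ n)%g
  | Negz n => (g ^+ n.+1)^-1%g
  end.

From mathcomp Require Import all_boot all_algebra all_fingroup.
From mathcomp Require Import cyclic ring.
Import GRing.Theory Num.Theory.
Local Open Scope ring_scope.

(* Only the cyclic group <[u]> matters, in which u^(r^k) depends on r^k modulo
   #[u], a divisor of m = #[y]; of the presentation of G only #[y] = m,
   r^p = 1 (mod m) and gcd(r - 1, m) = 1 are needed.  Since r^p = 1 (mod m), r
   is a unit mod m.  For 0 < t < p, a common divisor of m and r^t - 1 divides
   r^t - 1 and r^p - 1, hence r^gcd(t, p) - 1 = r - 1, so r^t - 1 is coprime to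
   m; thus r^s and r^s' - r^s = r^s (r^(s'-s) - 1) are coprime to #[u].  A power
   of u with exponent coprime to #[u] generates <[u]>, so u^(r^s) in M, or
   u^(r^s' - r^s) = u^(r^s') (u^(r^s))^-1 in M, forces u in M and with it the
   whole orbit.  Part (iii) is part (ii) for the trivial subgroup. *)

Section ExpgzCyclic.
Variables (gT : finGroupType) (u : gT).

Lemma absz_modz_order (z : int) : (absz (z %% #[u]%g)%Z)%:Z = (z %% #[u]%g)%Z.
Proof. by rewrite gez0_abs // modz_ge0 // eqz_nat -lt0n order_gt0. Qed.

Lemma expg_eqmodz (a b : nat) :
  (a%:Z = b%:Z %[mod #[u]%g])%Z -> (u ^+ a = u ^+ b)%g.
Proof.
by move=> eq_ab; apply/eqP; rewrite eq_expg_mod_order -eqz_nat -!modz_nat eq_ab.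
Qed.

Lemma expgz_mod_order (z : int) : expgz u z = (u ^+ absz (z %% #[u]%g)%Z)%g.
Proof.
case: z => n /=; first by apply: expg_eqmodz; rewrite absz_modz_order modz_mod.
apply/eqP; rewrite eq_invg_mul -expgD -(expg0 u); apply/eqP/expg_eqmodz.
by rewrite PoszD absz_modz_order modzDmr NegzE addrN.
Qed.

Lemma expgzD (a b : int) : expgz u (a + b) = (expgz u a * expgz u b)%g.
Proof.
rewrite !expgz_mod_order -expgD; apply: expg_eqmodz.
by rewrite PoszD !absz_modz_order modzDml modzDmr modz_mod.
Qed.

Lemma mem_expgz (K : {group gT}) (z : int) : u \in K -> expgz u z \in K.
Proof. by case: z => n uK /=; rewrite ?groupV groupX. Qed.

Lemma expgz_coprime_mem (K : {group gT}) (z : int) :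
  coprimez z #[u]%g -> expgz u z \in K -> u \in K.
Proof.
rewrite expgz_mod_order /coprimez -gcdz_modl -absz_modz_order => co_z.
have gen_uz : generator <[u]> (u ^+ absz (z %% #[u]%g)%Z)%g.
  by rewrite generator_coprime coprime_sym.
by rewrite -!cycle_subG (eqP gen_uz).
Qed.

Lemma rcoset_expgz_eq (K : {group gT}) (a b : int) :
  (K :* expgz u a = K :* expgz u b)%g -> expgz u (b - a) \in K.
Proof.
move=> eq_Kab; have := rcoset_refl K (expgz u b); rewrite -eq_Kab mem_rcoset.
have -> : expgz u b = (expgz u (b - a) * expgz u a)%g by rewrite -expgzD subrK.
by rewrite mulgK.
Qed.

End ExpgzCyclic.

Lemma dvdz_subX1 (d x : int) (n : nat) : (d %| x - 1)%Z -> (d %| x ^+ n - 1)%Z.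
Proof. by move=> dvd_d; rewrite subrX1 dvdz_mulr. Qed.

Lemma dvdz_sub1_coprime_exp (d r : int) (t p : nat) : (0 < t)%N -> coprime t p ->
  (d %| r ^+ t - 1)%Z -> (d %| r ^+ p - 1)%Z -> (d %| r - 1)%Z.
Proof.
move=> t_gt0 co_tp dvd_t dvd_p.
have [a _] := Bezoutl p t_gt0; rewrite (eqP co_tp) => /dvdnP[k kt_eq].
have dvd_kt : (d %| r ^+ (k * t) - 1)%Z by rewrite mulnC exprM dvdz_subX1.
have dvd_ap : (d %| r ^+ (a * p) - 1)%Z by rewrite mulnC exprM dvdz_subX1.
have -> : r - 1 = (r ^+ (k * t) - 1) - r * (r ^+ (a * p) - 1).
  by rewrite -kt_eq addnC exprD expr1; ring.
by rewrite rpredB // dvdz_mull.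
Qed.

Lemma coprimez_expr_sub1 (r : int) (m p t : nat) : prime p -> (0 < t < p)%N ->
  (r ^+ p == 1 %[mod m])%Z -> coprimez (r - 1) m -> coprimez (r ^+ t - 1) m.
Proof.
move=> p_pr /andP[t_gt0 t_lt_p]; rewrite eqz_mod_dvd => dvd_m co_r1.
have co_tp : coprime t p by rewrite coprime_sym prime_coprime // gtnNdvd.
have : (gcdz (r ^+ t - 1) m %| gcdz (r - 1) m)%Z.
  rewrite dvdz_gcd dvdz_gcdr andbT.
  rewrite (dvdz_sub1_coprime_exp _ _ t p t_gt0 co_tp) ?dvdz_gcdl //.
  exact: dvdz_trans (dvdz_gcdr _ _) dvd_m.
by rewrite (eqP co_r1) dvdz1 /coprimez /gcdz eqz_nat.
Qed.

Lemma coprimez_expr_eqmod1 (r : int) (m p : nat) : (0 < p)%N ->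
  (r ^+ p == 1 %[mod m])%Z -> coprimez r m.
Proof.
move=> p_gt0 rp_eq1.
rewrite -(coprimez_pexpl _ _ p_gt0) /coprimez -gcdz_modl (eqP rp_eq1).
by rewrite gcdz_modl /gcdz gcd1n.
Qed.

Lemma coprimez_exprB (r : int) (m p s s' : nat) : prime p -> (s < s' < p)%N ->
  (r ^+ p == 1 %[mod m])%Z -> coprimez (r - 1) m -> coprimez (r ^+ s' - r ^+ s) m.
Proof.
move=> p_pr /andP[lt_ss' lt_s'p] rp_eq1 co_r1.
have -> : r ^+ s' - r ^+ s = r ^+ s * (r ^+ (s' - s) - 1).
  by rewrite mulrBr mulr1 -exprD subnKC // ltnW.
rewrite coprimezMl coprimezXl /=.
  apply: coprimez_expr_sub1 p_pr _ rp_eq1 co_r1.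
  by rewrite subn_gt0 lt_ss' (leq_ltn_trans (leq_subr s s')).
exact: coprimez_expr_eqmod1 (prime_gt0 p_pr) rp_eq1.
Qed.

Theorem lemma3p1 (gT : finGroupType) (p m : nat) (r : int) (x y : gT)
    (M : {group gT}) (u : gT) (s s' : nat) :
    prime p -> (1 <= m)%N ->
    ((r ^+ p)%R == 1 %[mod m%:Z])%Z ->
    (* G = <x, y | x^p = y^m = 1, x^-1 y x = y^r >, |G| = p m *)
    #[x]%g = p -> #[y]%g = m ->
    (x^-1 * y * x)%g = expgz y r ->
    #|<<[set x; y]>>%g| = (p * m)%N ->
    (* p is the smallest prime divisor of |G| *)
    (forall q, prime q -> (q %| #|<<[set x; y]>>%g|)%N -> (p <= q)%N) ->
    coprimez (p%:Z * (r - 1))%R m%:Z ->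
    (M \subset <[y]>)%g ->
    u \in <[y]>%g ->
    (s < s')%N -> (s' <= p.-1)%N ->
    [/\ (expgz u (r ^+ s)%R \in M ->
           forall i, (i <= p.-1)%N -> expgz u (r ^+ i)%R \in M),
        ((M :* expgz u (r ^+ s)%R)%g = (M :* expgz u (r ^+ s')%R)%g ->
           forall i, (i <= p.-1)%N -> expgz u (r ^+ i)%R \in M)
      & (u != 1%g -> expgz u (r ^+ s)%R != expgz u (r ^+ s')%R)].
Proof.
move=> p_pr _ rp_eq1 _ o_y _ _ _ co_pr1 _ u_y lt_ss' le_s'p.
have o_u : (#[u]%g %| m)%N by rewrite -o_y order_dvdG.
have co_r1 : coprimez (r - 1) m by move: co_pr1; rewrite coprimezMl => /andP[].
have lt_s'p : (s' < p)%N by rewrite (leq_ltn_trans le_s'p) // ltn_predL prime_gt0.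
have co_rs : coprimez (r ^+ s) #[u]%g.
  apply: coprimez_dvdr o_u _; apply: coprimezXl.
  exact: coprimez_expr_eqmod1 (prime_gt0 p_pr) rp_eq1.
have co_ss' : coprimez (r ^+ s' - r ^+ s) #[u]%g.
  apply: coprimez_dvdr o_u _.
  by apply: coprimez_exprB p_pr _ rp_eq1 co_r1; rewrite lt_ss'.
have coset_mem (K : {group gT}) :
    (K :* expgz u (r ^+ s) = K :* expgz u (r ^+ s'))%g -> u \in K.
  by move/rcoset_expgz_eq/expgz_coprime_mem; apply.
split.
- by move/expgz_coprime_mem => /(_ co_rs) u_M i _; apply: mem_expgz.
- by move/coset_mem => u_M i _; apply: mem_expgz.
- apply: contraNneq => eq_ss'.
  by have := coset_mem 1%G; rewrite eq_ss' inE => /(_ erefl).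
Qed.
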